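(* For any CC-MAR instance $(G,\mathcal{T})$, there exists a strategy profile of minimum total cost in which all agents having identical terminal pairs (i.e., $(s_i,t_i)=(s_j,t_j)$) use identical paths.
   Context: A mixed graph $G=(V,E,A)$ has undirected edges $E\subseteq\binom{V}{2}$ with positive integer weights $w_e$ and arcs $A\subseteq V\times V$. A path is a sequence of pairwise distinct vertices in which consecutive vertices are joined by an edge or by an arc in the forward direction. A CC-MAR instance is $(G,\mathcal{T})$ with $\mathcal{T}$ a multiset of $k$ pairs $(s_i,t_i)$ (the same pair may occur several times), each connected by some path. A strategy profile $\mathcal{P}=\{P_1,\dots,P_k\}$ consists of $s_i$-$t_i$ paths. For $\{u,v\}\in E$, $x_{uv}$ is the number of paths traversing it from $u$ to $v$. The total cost is $\mathrm{cost}(\mathcal{P})=\sum_{\{u,v\}\in E}w_{uv}x_{uv}x_{vu}$. *)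

From mathcomp Require Import all_boot.
Set Implicit Arguments. Unset Strict Implicit. Unset Printing Implicit Defensive.

(* A mixed graph on a finite vertex type V:
   - E : rel V, the undirected edges ({u,v} \in E iff E u v; E symmetric, irreflexive),
   - w : V -> V -> nat, the (symmetric) edge weights,
   - A : rel V, the arcs ((u,v) \in A iff A u v). *)

Section MixedGraph.
Variables (V : finType) (E A : rel V).

Definition step : rel V := fun u v => E u v || A u v.

Definition is_stpath (s t : V) (p : seq V) : bool :=
  match p with
  | [::] => false
  | x :: q => [&& x == s, last x q == t, uniq p & path step x q]
  end.

Definition traverses (p : seq V) (u v : V) : bool :=
  (u, v) \in zip p (behead p).

Definition xflow (k : nat) (P : 'I_k -> seq V) (u v : V) : nat :=
  \sum_(i < k) (traverses (P i) u v : nat).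

Definition total_cost (w : V -> V -> nat) (k : nat) (P : 'I_k -> seq V) : nat :=
  \sum_(u : V) \sum_(v : V | (enum_rank u < enum_rank v) && E u v)
     w u v * xflow P u v * xflow P v u.

Definition is_profile (k : nat) (st : 'I_k -> V * V) (P : 'I_k -> seq V) : Prop :=
  forall i, is_stpath (st i).1 (st i).2 (P i).

End MixedGraph.

From mathcomp Require Import all_boot zify boolp.
Set Implicit Arguments. Unset Strict Implicit. Unset Printing Implicit Defensive.

(* Split the agents into a class g of agents with the same terminals and the
   rest. The cost of a profile is the cost among the agents outside g, plus for
   each agent of g the cost its path incurs against the outside agents, plus
   nonnegative terms between agents of g. If every agent of g switches to the
   path p of g that is cheapest against the outside, the middle part can only
   drop, and the last part vanishes because a simple path never traverses an
   edge in both directions. Hence among the optimal profiles, one with the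
   fewest pairs of same-terminal agents on different paths has none. *)

Lemma ex_argmin (T : Type) (P : T -> Prop) (f : T -> nat) :
  (exists x, P x) -> exists2 x, P x & forall y, P y -> f x <= f y.
Proof.
move=> [x Px].
have hasP : exists n, `[< exists2 y, P y & f y = n >].
  by exists (f x); apply/asboolP; exists x.
case: (ex_minnP hasP) => _ /asboolP [y Py <-] minf.
by exists y => // z Pz; apply/minf/asboolP; exists z.
Qed.

Lemma in_zip_behead (T : eqType) (x : T) q u v :
  (u, v) \in zip (x :: q) q -> v \in q.
Proof. by move/(map_f snd); rewrite -[map _ _]/(unzip2 _) unzip2_zip. Qed.

Lemma traverses_asym (V : finType) (p : seq V) u v :
  uniq p -> traverses p u v -> ~~ traverses p v u.
Proof.
rewrite /traverses; case: p => // x q.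
elim: q x => //= y q IH x /andP [xNyq uq].
rewrite !in_cons => /orP [/eqP [-> ->] | uv].
  apply/norP; split; first by apply: contra xNyq => /eqP [-> _]; rewrite mem_head.
  by apply: contra xNyq => /in_zip_behead; rewrite in_cons orbC => ->.
apply/norP; split; last exact: IH.
by apply: contra xNyq => /eqP [<- _]; rewrite in_cons (in_zip_behead uv) orbT.
Qed.

Lemma stpath_uniq (V : finType) (E A : rel V) s t p :
  is_stpath E A s t p -> uniq p.
Proof. by case: p => //= x q /and4P []. Qed.

Section Reroute.
Variables (V : finType) (E : rel V) (w : V -> V -> nat) (k : nat).

Definition edge_pair (e : V * V) := (enum_rank e.1 < enum_rank e.2) && E e.1 e.2.

Lemma total_cost_pairs (P : 'I_k -> seq V) :
  total_cost E w P =
  \sum_(e | edge_pair e) w e.1 e.2 * xflow P e.1 e.2 * xflow P e.2 e.1.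
Proof. exact: pair_big_dep. Qed.

Variables (g : pred 'I_k) (Q : 'I_k -> seq V).

Definition outflow (u v : V) := \sum_(i | ~~ g i) (traverses (Q i) u v : nat).

Definition outside_cost :=
  \sum_(e | edge_pair e) w e.1 e.2 * outflow e.1 e.2 * outflow e.2 e.1.

Definition crossing_cost (p : seq V) :=
  \sum_(e | edge_pair e) w e.1 e.2 *
    (outflow e.1 e.2 * traverses p e.2 e.1 + traverses p e.1 e.2 * outflow e.2 e.1).

Definition reroute (p : seq V) (i : 'I_k) := if g i then p else Q i.

Lemma xflow_split u v :
  xflow Q u v = \sum_(i < k | g i) (traverses (Q i) u v : nat) + outflow u v.
Proof. exact: bigID. Qed.

Lemma xflow_reroute p u v : xflow (reroute p) u v = #|g| * traverses p u v + outflow u v.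
Proof.
rewrite /xflow (bigID g) -sum1_card big_distrl /=; congr (_ + _).
  by apply: eq_bigr => i gi; rewrite /reroute gi mul1n.
by apply: eq_bigr => i /negbTE gNi; rewrite /reroute gNi.
Qed.

Lemma total_cost_ge :
  outside_cost + \sum_(i | g i) crossing_cost (Q i) <= total_cost E w Q.
Proof.
rewrite total_cost_pairs /crossing_cost exchange_big -big_split /=.
apply: leq_sum => e _; rewrite -big_distrr big_split /= -!big_distrr -big_distrl /=.
rewrite !xflow_split.
by move: (w _ _) (outflow _ _) (outflow _ _) (\sum_(i < k | g i) _) (\sum_(i < k | g i) _)
  => c o o' b b'; nia.
Qed.

Lemma total_cost_reroute p : uniq p ->
  total_cost E w (reroute p) = outside_cost + #|g| * crossing_cost p.
Proof.
move=> up; rewrite total_cost_pairs big_distrr -big_split /=.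
apply: eq_bigr => e _; rewrite !xflow_reroute.
case: (boolP (traverses p e.1 e.2)) => [/(traverses_asym up)/negbTE -> | _];
  last case: (traverses p e.2 e.1);
  by move: (w _ _) (outflow _ _) (outflow _ _) #|g| => c o o' m; nia.
Qed.

Lemma total_cost_reroute_le p : uniq p ->
  (forall i, g i -> crossing_cost p <= crossing_cost (Q i)) ->
  total_cost E w (reroute p) <= total_cost E w Q.
Proof.
move=> up p_min; rewrite total_cost_reroute //; apply: leq_trans total_cost_ge.
rewrite leq_add2l -sum1_card big_distrl /=.
by apply: leq_sum => i gi; rewrite mul1n p_min.
Qed.

End Reroute.

Section TerminalClasses.
Variables (V : finType) (E A : rel V) (k : nat) (st : 'I_k -> V * V).

Definition same_terminals (i : 'I_k) : pred 'I_k := fun l => st l == st i.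

Definition discord (P : 'I_k -> seq V) : {set 'I_k * 'I_k} :=
  [set ij | (st ij.1 == st ij.2) && (P ij.1 != P ij.2)].

Lemma is_profile_reroute P i j : is_profile E A st P -> st j = st i ->
  is_profile E A st (reroute (same_terminals i) P (P j)).
Proof.
move=> Pprof stj l; rewrite /reroute /same_terminals.
by case: ifP => [/eqP -> | _]; rewrite -?stj; apply: Pprof.
Qed.

Lemma discord_reroute_proper P i i' p : (i, i') \in discord P ->
  discord (reroute (same_terminals i) P p) \proper discord P.
Proof.
rewrite inE /= => /andP [/eqP sti' Pii']; apply/properP; split.
  apply/subsetP => -[a b]; rewrite !inE /reroute /same_terminals /=.
  by case/andP=> /eqP ->; case: ifP => _; rewrite eqxx.
by exists (i, i'); rewrite !inE /reroute /same_terminals /= -sti' !eqxx ?Pii'.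
Qed.

End TerminalClasses.

Theorem mainTheorem7 (V : finType) (E A : rel V) (w : V -> V -> nat)
  (k : nat) (st : 'I_k -> V * V) :
  (forall u v, E u v = E v u) ->
  (forall u, ~~ E u u) ->
  (forall u v, w u v = w v u) ->
  (forall u v, E u v -> 0 < w u v) ->
  (forall i, exists p, is_stpath E A (st i).1 (st i).2 p) ->
  exists P : 'I_k -> seq V,
    [/\ is_profile E A st P,
        (forall i j, st i = st j -> P i = P j) &
        (forall Q : 'I_k -> seq V, is_profile E A st Q ->
           total_cost E w P <= total_cost E w Q)].
Proof.
move=> _ _ _ _ has_path.
pose optimal P := is_profile E A st P /\
  forall Q, is_profile E A st Q -> total_cost E w P <= total_cost E w Q.
have has_profile : exists P, is_profile E A st P.
  by exists (fun i => xchoose (has_path i)) => i; apply: xchooseP.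
have [P0 P0prof P0opt] := ex_argmin (@total_cost _ E w k) has_profile.
have [P [Pprof Popt] P_min] :=
  ex_argmin (fun P => #|discord st P|) (ex_intro optimal P0 (conj P0prof P0opt)).
exists P; split => // i i' sti; apply/eqP; apply: contraT => Pii'.
have ii'_discord : (i, i') \in discord st P by rewrite inE /= sti eqxx Pii'.
pose g := same_terminals st i.
have [j gj j_min] := @arg_minnP _ i g (fun l => crossing_cost E w g P (P l)) (eqxx _).
have Rprof := is_profile_reroute Pprof (eqP gj).
have Rcost := total_cost_reroute_le (stpath_uniq (Pprof j)) j_min.
have Ropt : optimal (reroute g P (P j)).
  by split => // Q Qprof; apply: leq_trans Rcost (Popt Q Qprof).
by have := P_min _ Ropt; rewrite leqNgt (proper_card (discord_reroute_proper _ ii'_discord)).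
Qed.
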